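(* For every Clifford circuit $\mathcal C$ and all fault operators $F,G$ of $\mathcal C$, $[\overrightarrow F,G]=[F,\overleftarrow G]$.
   Context: A Clifford circuit on $n$ qubits is a finite sequence of operations, each a unitary Clifford gate or a Pauli measurement, each with a level in $\{1,2,\dots\}$, operations of equal level having disjoint supports; the depth $\Delta$ is the maximal level. $\overline{\mathcal P}_N$ is the $N$-qubit Pauli group modulo phases; for Paulis $P,Q$, $[P,Q]\in\mathbb Z_2$ is $0$ if they commute and $1$ otherwise. For $1\le\ell\le\Delta$, $U_\ell$ is the product of all unitary gates of level $\ell$ (identity if none). A fault operator is $F\in\overline{\mathcal P}_{n(\Delta+1)}$ acting on qubits $(\ell+0.5,q)$, $0\le\ell\le\Delta$, $1\le q\le n$; $F_{\ell+0.5}\in\overline{\mathcal P}_n$ is its component on level $\ell+0.5$. Cumulant $\overrightarrow F$: start with $\overrightarrow F=F$; for $\ell=1,\dots,\Delta$ in increasing order replace $\overrightarrow F_{\ell+0.5}$ by $\overrightarrow F_{\ell+0.5}\cdot U_\ell\overrightarrow F_{\ell-0.5}U_\ell^{-1}$. Back-cumulant $\overleftarrow F$: start with $\overleftarrow F=F$; for $\ell=\Delta,\dots,1$ in decreasing order replace $\overleftarrow F_{\ell-0.5}$ by $\overleftarrow F_{\ell-0.5}\cdot U_\ell^{-1}\overleftarrow F_{\ell+0.5}U_\ell$. *)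

From mathcomp Require Import all_boot.
Set Implicit Arguments. Unset Strict Implicit. Unset Printing Implicit Defensive.

(* A Pauli on the qubit set Q, modulo phases, is given on each qubit by its
   (x,z) bits: (false,false)=I, (true,false)=X, (false,true)=Z, (true,true)=Y. *)
Definition pauli (Q : finType) := {ffun Q -> bool * bool}.

Definition pid (Q : finType) : pauli Q := [ffun _ => (false, false)].

Definition pmul (Q : finType) (P R : pauli Q) : pauli Q :=
  [ffun q => ((P q).1 (+) (R q).1, (P q).2 (+) (R q).2)].

(* [P,R] in Z_2 (encoded as bool): false = commute, true = anticommute *)
Definition pcomm (Q : finType) (P R : pauli Q) : bool :=
  \big[addb/false]_(q : Q) (((P q).1 && (R q).2) (+) ((P q).2 && (R q).1)).

(* cl_map P = U P U^{-1}, cl_inv P = U^{-1} P U (modulo phases).  Conjugation by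
   a Clifford unitary is exactly a bijective automorphism of the Pauli group mod
   phases preserving commutation. *)
Record clifford (Q : finType) := Clifford {
  cl_map : pauli Q -> pauli Q;
  cl_inv : pauli Q -> pauli Q;
  cl_mapK : cancel cl_map cl_inv;
  cl_invK : cancel cl_inv cl_map;
  cl_mul : forall P R, cl_map (pmul P R) = pmul (cl_map P) (cl_map R);
  cl_comm : forall P R, pcomm (cl_map P) (cl_map R) = pcomm P R }.

(* a gate acting on the n-qubit register with support S: U = U_S (x) I *)
Definition gate_local (n : nat) (S : {set 'I_n}) (f : pauli 'I_n -> pauli 'I_n) :=
  (forall (P : pauli 'I_n) q, q \notin S -> f P q = P q) /\
  (forall P R : pauli 'I_n, (forall q, q \in S -> P q = R q) -> forall q, q \in S -> f P q = f R q).

Inductive op (n : nat) :=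
| Gate of nat & {set 'I_n} & clifford 'I_n
| Meas of nat & {set 'I_n} & pauli 'I_n .

Definition op_level n (o : op n) : nat :=
  match o with Gate l _ _ => l | Meas l _ _ => l end.
Definition op_supp n (o : op n) : {set 'I_n} :=
  match o with Gate _ A _ => A | Meas _ A _ => A end.
Definition op_wf n (o : op n) : Prop :=
  match o with
  | Gate l A g => 0 < l /\ gate_local A (cl_map g)
  | Meas l A P => 0 < l /\ (forall q, q \notin A -> P q = (false, false))
  end.

Definition op0 (n : nat) : op n := Meas 0 set0 (pid 'I_n).

Definition circuit n := seq (op n).

Definition circuit_wf n (C : circuit n) : Prop :=
  (forall i, i < size C -> op_wf (nth (op0 n) C i)) /\
  (forall i j, i < size C -> j < size C -> i != j ->
     op_level (nth (op0 n) C i) = op_level (nth (op0 n) C j) ->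
     [disjoint op_supp (nth (op0 n) C i) & op_supp (nth (op0 n) C j)]).

Definition depth n (C : circuit n) : nat := \max_(o <- C) op_level o.

Fixpoint gates_at n (C : circuit n) (l : nat) : seq (clifford 'I_n) :=
  match C with
  | [::] => [::]
  | Gate l' _ g :: C' => if l' == l then g :: gates_at C' l else gates_at C' l
  | Meas _ _ _ :: C' => gates_at C' l
  end.

(* U_l P U_l^{-1}, with U_l = g_1 g_2 ... g_k *)
Definition Uconj n (C : circuit n) (l : nat) (P : pauli 'I_n) : pauli 'I_n :=
  foldr (fun g P => cl_map g P) P (gates_at C l).
(* U_l^{-1} P U_l *)
Definition Uinvconj n (C : circuit n) (l : nat) (P : pauli 'I_n) : pauli 'I_n :=
  foldl (fun P g => cl_inv g P) P (gates_at C l).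

(* qubit (l + 0.5, q) is encoded as (l, q) with l : 'I_(depth C).+1 *)
Definition fault n (C : circuit n) := pauli ('I_(depth C).+1 * 'I_n)%type.

Definition fcomp n (C : circuit n) (F : fault C) (l : nat) : pauli 'I_n :=
  [ffun q => F (inord l, q)].

Fixpoint cum_aux n (C : circuit n) (F : fault C) (l : nat) : pauli 'I_n :=
  match l with
  | 0 => fcomp F 0
  | l'.+1 => pmul (fcomp F l) (Uconj C l (cum_aux F l'))
  end.

Definition cumulant n (C : circuit n) (F : fault C) : fault C :=
  [ffun lq : 'I_(depth C).+1 * 'I_n => cum_aux F lq.1 lq.2].

(* bcum_aux G k = back-cumulant component on level (depth C - k) + 0.5 *)
Fixpoint bcum_aux n (C : circuit n) (G : fault C) (k : nat) : pauli 'I_n :=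
  match k with
  | 0 => fcomp G (depth C)
  | k'.+1 => pmul (fcomp G (depth C - k))
                  (Uinvconj C (depth C - k') (bcum_aux G k'))
  end.

Definition bcumulant n (C : circuit n) (G : fault C) : fault C :=
  [ffun lq : 'I_(depth C).+1 * 'I_n => bcum_aux G (depth C - lq.1) lq.2].

From mathcomp Require Import all_boot.

Set Implicit Arguments.
Unset Strict Implicit.
Unset Printing Implicit Defensive.

(* The commutation form [.,.] is Z_2-bilinear, and conjugation by a Clifford
   unitary U preserves it, so U is adjoint to U^-1: [U P U^-1, R] = [P, U^-1 R U].
   Splitting [F, G] over levels, the forward recursion of the cumulant and the
   backward recursion of the back-cumulant then telescope into each other:
   for m <= depth, the sum of [F_l, <-G_l] over l <= m equals the sum of
   [->F_l, G_l] over l < m plus [->F_m, <-G_m].  At m = depth the last term is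
   [->F_depth, G_depth].  No well-formedness of the circuit is needed. *)

Section CommutationForm.

Variable Q : finType.
Implicit Types P R S : pauli Q.

Lemma pcommC P R : pcomm P R = pcomm R P.
Proof.
by apply: eq_bigr => q _; case: (P q) (R q) => [[] []] [[] []].
Qed.

Lemma pcommMl P R S : pcomm (pmul P R) S = pcomm P S (+) pcomm R S.
Proof.
rewrite /pcomm -big_split; apply: eq_bigr => q _; rewrite ffunE /=.
by case: (P q) (R q) (S q) => [[] []] [[] []] [[] []].
Qed.

Lemma pcommMr P R S : pcomm S (pmul P R) = pcomm S P (+) pcomm S R.
Proof. by rewrite pcommC pcommMl !(pcommC _ S). Qed.

Lemma cl_adj (g : clifford Q) P R : pcomm (cl_map g P) R = pcomm P (cl_inv g R).
Proof. by rewrite -{1}(cl_invK g R) cl_comm. Qed.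

Lemma foldr_cl_adj (s : seq (clifford Q)) P R :
  pcomm (foldr (fun g P => cl_map g P) P s) R
  = pcomm P (foldl (fun P g => cl_inv g P) R s).
Proof. by elim: s P R => //= g s IH P R; rewrite cl_adj IH. Qed.

Lemma pcomm_pair (I : finType) (P R : pauli (I * Q)%type) :
  pcomm P R = \big[addb/false]_(i : I)
                pcomm [ffun q => P (i, q)] [ffun q => R (i, q)].
Proof.
rewrite /pcomm pair_big /=; apply: eq_bigr => [[i q]] _.
by rewrite !ffunE.
Qed.

End CommutationForm.

Section Telescoping.

Variables (Q : finType) (D : nat).
Variables (T T' : nat -> pauli Q -> pauli Q).
Hypothesis T_adj : forall l P R, pcomm (T l P) R = pcomm P (T' l R).

Variables (f g a b : nat -> pauli Q).
Hypothesis a0 : a 0 = f 0.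
Hypothesis aS : forall m, a m.+1 = pmul (f m.+1) (T m.+1 (a m)).
Hypothesis bS : forall m, m < D -> b m = pmul (g m) (T' m.+1 (b m.+1)).
Hypothesis bD : b D = g D.

Lemma telescope_partial m : m <= D ->
  \big[addb/false]_(0 <= l < m.+1) pcomm (f l) (b l)
  = \big[addb/false]_(0 <= l < m) pcomm (a l) (g l) (+) pcomm (a m) (b m).
Proof.
elim: m => [_ | m IH ltmD]; first by rewrite big_nat1 big_geq // a0.
rewrite big_nat_recr //= IH ?(ltnW ltmD) // big_nat_recr //=.
rewrite (bS ltmD) pcommMr -T_adj aS pcommMl.
by rewrite -!addbA (addbC (pcomm (T _ _) _)).
Qed.

Lemma telescope :
  \big[addb/false]_(0 <= l < D.+1) pcomm (a l) (g l)
  = \big[addb/false]_(0 <= l < D.+1) pcomm (f l) (b l).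
Proof. by rewrite telescope_partial // big_nat_recr //= bD. Qed.

End Telescoping.

Section Cumulants.

Variables (n : nat) (C : circuit n).
Local Notation D := (depth C).

Lemma Uconj_adj l P R : pcomm (Uconj C l P) R = pcomm P (Uinvconj C l R).
Proof. exact: foldr_cl_adj. Qed.

Lemma pcomm_levels (F G : fault C) :
  pcomm F G = \big[addb/false]_(0 <= l < D.+1) pcomm (fcomp F l) (fcomp G l).
Proof.
rewrite pcomm_pair big_mkord; apply: eq_bigr => l _.
by congr pcomm; apply/ffunP => q; rewrite !ffunE inord_val.
Qed.

Lemma fcomp_cumulant (F : fault C) l : l <= D ->
  fcomp (cumulant F) l = cum_aux F l.
Proof. by move=> leD; apply/ffunP => q; rewrite !ffunE /= inordK. Qed.

Lemma fcomp_bcumulant (G : fault C) l : l <= D ->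
  fcomp (bcumulant G) l = bcum_aux G (D - l).
Proof. by move=> leD; apply/ffunP => q; rewrite !ffunE /= inordK. Qed.

Lemma bcum_auxS (G : fault C) m : m < D ->
  bcum_aux G (D - m) = pmul (fcomp G m) (Uinvconj C m.+1 (bcum_aux G (D - m.+1))).
Proof.
by move=> ltmD; rewrite -(subnSK ltmD) /= subnSK // !subKn // ltnW.
Qed.

End Cumulants.

Theorem mainTheorem8 (n : nat) (C : circuit n) (HC : circuit_wf C)
  (F G : fault C) :
  pcomm (cumulant F) G = pcomm F (bcumulant G).
Proof.
rewrite !pcomm_levels.
rewrite (eq_big_nat _ _ (F2 := fun l => pcomm (cum_aux F l) (fcomp G l)));
  last by move=> l /andP[_ ltl]; rewrite fcomp_cumulant.
rewrite [RHS](eq_big_nat _ _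
    (F2 := fun l => pcomm (fcomp F l) (bcum_aux G (depth C - l))));
  last by move=> l /andP[_ ltl]; rewrite fcomp_bcumulant.
apply: (telescope (@Uconj_adj n C)) => //.
- exact: bcum_auxS.
- by rewrite subnn.
Qed.
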